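(* Let $V$ and $V^+$ be as in the setup below and, for $1\le i\le n$, let $z_i:V^+\to V^+$ be a bijective highest central operator of degree $M_ie_i$ ($M_i\in\mathbb Z$, $e_i$ the $i$-th standard basis vector of $\mathbb Z^n$). Define $T_i:V^+\to V^+$ by $T_i(z_iv)=v$ for all $v\in V^+$, and $W=\operatorname{Span}_{\mathbb C}\{z_iv-v\mid v\in V^+,\ 1\le i\le n\}$. Then: (1) $T_iz_i=\mathrm{Id}$; (2) $[T_i,H\otimes\mathbb C_q]=0$; (3) $T_iv-v\in W$ for all $v\in V^+$; (4) $T_i^kv-v\in W$ for all $k\ge1$, $v\in V^+$; (5) $z_i^kv-v\in W$ for all $k\ge1$, $v\in V^+$.
   Context: Fix integers $n\ge2$, $d\ge2$. Let $q=(q_{ij})_{1\le i,j\le n}$ with $q_{ij}\in\mathbb C^\times$ roots of unity, $q_{ii}=1$, $q_{ij}=q_{ji}^{-1}$. The rational quantum torus $\mathbb C_q$ is generated by $t_1^{\pm1},\dots,t_n^{\pm1}$ with $t_it_i^{-1}=t_i^{-1}t_i=1$, $t_it_j=q_{ij}t_jt_i$; $t^a=t_1^{a_1}\cdots t_n^{a_n}$, $t^at^b=f(a,b)t^bt^a$ with $f(a,b)=\prod_{i,j}q_{ji}^{a_jb_i}$, $\operatorname{rad}f=\{a: f(a,b)=1\ \forall b\}$; $Z(\mathbb C_q)$ is spanned by $t^a$, $a\in\operatorname{rad}f$. $\tau(d,q)=\mathfrak{sl}_d(\mathbb C_q)$: $d\times d$ matrices over $\mathbb C_q$ with trace in $[\mathbb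 C_q,\mathbb C_q]$, commutator bracket. With $J\subset\mathbb C_q\otimes\mathbb C_q$ spanned by $x\otimes y+y\otimes x$, $xy\otimes z+yz\otimes x+zx\otimes y$, let $\langle t^a,t^b\rangle$ ($a+b\in\operatorname{rad}f$) be the image of $t^a\otimes t^b$ modulo $J$, $HC_1(\mathbb C_q)$ their span; $\tilde\tau(d,q)=\tau(d,q)\oplus HC_1(\mathbb C_q)$ with $HC_1$ central and $[X\otimes t^a,Y\otimes t^b]=(XY\otimes t^at^b-YX\otimes t^bt^a)+\mathrm{Tr}(XY)\langle t^a,t^b\rangle$ if $a+b\in\operatorname{rad}f$ (no last term otherwise); $\hat\tau(d,q)=\tilde\tau(d,q)\oplus D$, $D=\bigoplus_i\mathbb Cd_i$, $[d_i,d_j]=0$, $[d_i,X\otimes t^a]=a_iX\otimes t^a$, $[d_i,\langle t^a,t^b\rangle]=(a_i+b_i)\langle t^a,t^b\rangle$. Integrable: direct sum of weight spaces for $\mathfrak h=\dot{\mathfrak h}\oplus\bigoplus\mathbb C\langle t_i,t_i^{-1}\rangle\oplus\bigoplus\mathbb Cd_i$ ($\dot{\mathfrak h}$ = trace-zero diagonal matrices) and each $x_\alpha\otimes t^m$ ($x_\alpha$ a root vector of $\mathfrak{sl}_d(\mathbb C)$) acts locally nilpotently. Setup: $V$ is an irreducible integrable $\hat\tau(d,q)$-module with finite-dimensional weight spaces on which $HC_1(\mathbb C_q)$ acts trivially, regarded as a module over $(\mathfrak{gl}_d(\mathbb C)\otimes\mathbb C_q)\oplus D$ via $\mathfrak{gl}_d(\mathbb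 C)\otimes\mathbb C_q=\mathfrak{sl}_d(\mathbb C_q)\oplus(I_d\otimes Z(\mathbb C_q))$ with $I_d\otimes Z(\mathbb C_q)$ acting by zero. $H$ = diagonal matrices in $\mathfrak{gl}_d(\mathbb C)$, $N^+$ = strictly upper triangular matrices, $V^+=\{v\in V:(N^+\otimes\mathbb C_q)v=0\}$. A highest central operator of degree $m\in\mathbb Z^n$ is a linear map $z:V^+\to V^+$ commuting with the action of $H\otimes\mathbb C_q$ with $d_iz-zd_i=m_iz$ for all $i$. *)

From HB Require Import structures.
From mathcomp Require Import all_boot all_order all_algebra.
From mathcomp Require Import complex Rstruct.
Set Implicit Arguments.
Unset Strict Implicit.
Unset Printing Implicit Defensive.
Import Order.TTheory GRing.Theory Num.Theory.
Local Open Scope ring_scope.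

Definition CC : numClosedFieldType := (Rdefinitions.R)[i]%C.

Definition Zn (n : nat) := 'I_n -> int.
Definition addZn n (a b : Zn n) : Zn n := fun i => a i + b i.
Definition zeroZn n : Zn n := fun _ => 0.
Definition sce n (M : int) (i : 'I_n) : Zn n := fun j => if j == i then M else 0.

(* f(a,b) = prod_{i,j} q_{ji}^{a_j b_i}  :  t^a t^b = f(a,b) t^b t^a *)
Definition fq n (q : 'I_n -> 'I_n -> CC) (a b : Zn n) : CC :=
  \prod_(i < n) \prod_(j < n) (q j i) ^ (a j * b i).
Definition radf n (q : 'I_n -> 'I_n -> CC) (a : Zn n) : Prop :=
  forall b : Zn n, fq q a b = 1.
(* structure constants of C_q in the basis t^a = t_1^{a_1} ... t_n^{a_n}:
   t^a t^b = sigq a b * t^(a+b),  sigq a b = prod_{i>j} q_{ij}^{a_i b_j}. *)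
Definition sigq n (q : 'I_n -> 'I_n -> CC) (a b : Zn n) : CC :=
  \prod_(i < n) \prod_(j < n | (j < i)%N) (q i j) ^ (a i * b j).

Definition qdata n (q : 'I_n -> 'I_n -> CC) : Prop :=
  [/\ forall i j, exists k : nat, (0 < k)%N /\ q i j ^+ k = 1,
      forall i, q i i = 1 &
      forall i j, q i j = (q j i)^-1].

Section Mod.
Variables (n d : nat) (q : 'I_n -> 'I_n -> CC) (V : lmodType CC).
(* rho X a  is the action of  X (x) t^a  (X in gl_d(C)),  dd i  that of d_i *)
Variables (rho : 'M[CC]_d -> Zn n -> V -> V) (dd : 'I_n -> V -> V).

Definition linmap (f : V -> V) : Prop :=
  forall (c : CC) (u v : V), f (c *: u + v) = c *: f u + f v.

(* V is a module over (gl_d(C) (x) C_q) (+) D, with I_d (x) Z(C_q) acting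
   by zero; equivalently a module over hat-tau(d,q) with HC_1 acting by 0. *)
Definition qt_module : Prop :=
  [/\ forall X a, linmap (rho X a),
      forall a (c : CC) X Y v, rho (c *: X + Y) a v = c *: rho X a v + rho Y a v,
      forall X Y a b v,
        rho X a (rho Y b v) - rho Y b (rho X a v) =
        sigq q a b *: rho (X *m Y) (addZn a b) v
        - sigq q b a *: rho (Y *m X) (addZn a b) v,
      forall a, radf q a -> forall v, rho 1%:M a v = 0 &
      [/\ forall i, linmap (dd i),
          forall i j v, dd i (dd j v) = dd j (dd i v) &
          forall i X a v, dd i (rho X a v) - rho X a (dd i v) = (a i)%:~R *: rho X a v]].

Definition invariant_subspace (S : V -> Prop) : Prop :=
  [/\ S 0, forall (c : CC) u v, S u -> S v -> S (c *: u + v),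
      forall X a v, S v -> S (rho X a v) &
      forall i v, S v -> S (dd i v)].

Definition irreducible : Prop :=
  (exists v : V, v != 0) /\
  forall S, invariant_subspace S -> (forall v, S v -> v = 0) \/ (forall v, S v).

Definition in_doth (X : 'M[CC]_d) : Prop := is_diag_mx X /\ \tr X = 0.
Definition in_H (X : 'M[CC]_d) : Prop := is_diag_mx X.
Definition in_Nplus (X : 'M[CC]_d) : Prop :=
  forall i j : 'I_d, (j <= i)%N -> X i j = 0.

(* v is a weight vector (possibly 0) of weight (lam, del) for
   h = dot-h (+) (+)C<t_i,t_i^-1> (+) D  (the middle part acts by 0) *)
Definition weight_vec (lam : 'M[CC]_d -> CC) (del : 'I_n -> CC) (v : V) : Prop :=
  (forall X, in_doth X -> rho X (@zeroZn n) v = lam X *: v) /\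
  (forall i, dd i v = del i *: v).

Definition integrable : Prop :=
  (forall v : V, exists (m : nat) (lams : 'I_m -> 'M[CC]_d -> CC)
       (dels : 'I_m -> 'I_n -> CC) (ws : 'I_m -> V),
       (forall k, weight_vec (lams k) (dels k) (ws k)) /\ v = \sum_(k < m) ws k) /\
  (forall (k l : 'I_d), k != l -> forall (a : Zn n) (v : V),
       exists N : nat, iter N (rho (delta_mx k l) a) v = 0).

Definition fin_dim_weight_spaces : Prop :=
  forall lam del, exists (m : nat) (b : 'I_m -> V),
    forall v, weight_vec lam del v -> exists c : 'I_m -> CC, v = \sum_(k < m) c k *: b k.

Definition Vplus (v : V) : Prop :=
  forall X a, in_Nplus X -> rho X a v = 0.

(* highest central operator of degree m (a map V^+ -> V^+, represented by a
   function V -> V whose values off V^+ are irrelevant) *)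
Definition highest_central (m : Zn n) (z : V -> V) : Prop :=
  [/\ forall v, Vplus v -> Vplus (z v),
      forall (c : CC) u v, Vplus u -> Vplus v -> z (c *: u + v) = c *: z u + z v,
      forall X a v, in_H X -> Vplus v -> z (rho X a v) = rho X a (z v) &
      forall i v, Vplus v -> dd i (z v) - z (dd i v) = (m i)%:~R *: z v].

Definition bijective_on_Vplus (z : V -> V) : Prop :=
  (forall u v, Vplus u -> Vplus v -> z u = z v -> u = v) /\
  (forall w, Vplus w -> exists v, Vplus v /\ z v = w).

Definition inW (z : 'I_n -> V -> V) (w : V) : Prop :=
  exists (m : nat) (c : 'I_m -> CC) (idx : 'I_m -> 'I_n) (vs : 'I_m -> V),
    (forall k, Vplus (vs k)) /\
    w = \sum_(k < m) c k *: (z (idx k) (vs k) - vs k).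

End Mod.

(* Everything follows from T being a two-sided inverse of z_i on V^+, which is
   where bijectivity enters: for w in V^+ write w = z_i u, so T_i w = u lies in
   V^+ and z_i (T_i w) = w.  Hence T_i v - v = -(z_i u - u) with u = T_i v, and
   the statements about powers telescope, since W is a subspace containing
   f u - u for f = z_i, T_i and every u in V^+, and both maps preserve V^+.
   The commutation of T_i with H (x) C_q is inherited from z_i, once one knows
   that H (x) C_q preserves V^+: for X diagonal and Y strictly upper triangular,
   XY and YX are again strictly upper triangular, so [Y (x) t^b, X (x) t^a]
   kills V^+. *)
From HB Require Import structures.
From mathcomp Require Import all_boot all_order all_algebra.
From mathcomp Require Import complex Rstruct.
Set Implicit Arguments.
Unset Strict Implicit.
Unset Printing Implicit Defensive.
Import GRing.Theory Num.Theory.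
Local Open Scope ring_scope.

Lemma linmap0 (V : lmodType CC) (f : V -> V) : linmap f -> f 0 = 0.
Proof.
move=> f_lin; have := f_lin 1 0 0; rewrite !scale1r addr0 => /eqP.
by rewrite -subr_eq subrr eq_sym => /eqP.
Qed.

Section NplusDiag.
Variable d : nat.
Implicit Types X Y : 'M[CC]_d.

Lemma Nplus_mulmx_diag X Y : is_diag_mx X -> in_Nplus Y -> in_Nplus (Y *m X).
Proof.
move=> /is_diag_mxP X_diag Y_up k l le_lk; rewrite mxE (bigD1 l) //= big1.
  by rewrite Y_up // mul0r addr0.
by move=> m ne_ml; rewrite X_diag ?mulr0.
Qed.

Lemma Nplus_diag_mulmx X Y : is_diag_mx X -> in_Nplus Y -> in_Nplus (X *m Y).
Proof.
move=> /is_diag_mxP X_diag Y_up k l le_lk; rewrite mxE (bigD1 k) //= big1.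
  by rewrite Y_up // mulr0 addr0.
by move=> m ne_mk; rewrite X_diag ?mul0r // eq_sym.
Qed.

End NplusDiag.

Section HighestSpace.
Variables (n d : nat) (V : lmodType CC) (rho : 'M[CC]_d -> Zn n -> V -> V).
Local Notation Vplus := (Vplus rho).

Lemma Vplus_rho_H (q : 'I_n -> 'I_n -> CC) (dd : 'I_n -> V -> V) X a {v} :
  qt_module q rho dd -> in_H X -> Vplus v -> Vplus (rho X a v).
Proof.
move=> [rho_lin _ rho_comm _ _] X_diag Vv Y b Y_up.
have := rho_comm Y X b a v.
rewrite (Vv Y b Y_up) (Vv _ _ (Nplus_mulmx_diag X_diag Y_up)).
rewrite (Vv _ _ (Nplus_diag_mulmx X_diag Y_up)) (linmap0 (rho_lin _ _)).
by rewrite !scaler0 subr0 subrr.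
Qed.

Lemma Vplus_iter (f : V -> V) k v :
  (forall u, Vplus u -> Vplus (f u)) -> Vplus v -> Vplus (iter k f v).
Proof. by move=> f_Vplus Vv; elim: k => //= k; apply: f_Vplus. Qed.

Section Span.
Variable z : 'I_n -> V -> V.
Local Notation inW := (inW rho z).

Lemma inW0 : inW 0.
Proof.
exists 0%N, (fun=> 0), (fun k : 'I_0 => False_rect _ (notF (ltn_ord k))), (fun=> 0).
by split=> [[]|]; rewrite ?big_ord0.
Qed.

Lemma inW_gen i v : Vplus v -> inW (z i v - v).
Proof.
move=> Vv; exists 1%N, (fun=> 1), (fun=> i), (fun=> v).
by rewrite big_ord1 scale1r.
Qed.

Lemma inWZ c w : inW w -> inW (c *: w).
Proof.
move=> [m [cs [idx [vs [Vvs ->]]]]]; exists m, (fun k => c * cs k), idx, vs.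
by split=> //; rewrite scaler_sumr; apply: eq_bigr => k _; rewrite scalerA.
Qed.

Lemma inWD w1 w2 : inW w1 -> inW w2 -> inW (w1 + w2).
Proof.
move=> [m1 [c1 [idx1 [vs1 [Vvs1 ->]]]]] [m2 [c2 [idx2 [vs2 [Vvs2 ->]]]]].
pose glue T (f1 : 'I_m1 -> T) (f2 : 'I_m2 -> T) (k : 'I_(m1 + m2)) :=
  match split k with inl k1 => f1 k1 | inr k2 => f2 k2 end.
exists (m1 + m2)%N, (glue _ c1 c2), (glue _ idx1 idx2), (glue _ vs1 vs2).
split; first by move=> k; rewrite /glue; case: split.
by rewrite big_split_ord /glue; congr (_ + _); apply: eq_bigr => k _;
  rewrite (unsplitK (inl _)) || rewrite (unsplitK (inr _)).
Qed.

Lemma inW_iter_sub (f : V -> V) k v :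
  (forall u, Vplus u -> Vplus (f u)) -> (forall u, Vplus u -> inW (f u - u)) ->
  Vplus v -> inW (iter k f v - v).
Proof.
move=> f_Vplus f_sub Vv; elim: k => [|k IHk]; first by rewrite subrr; apply: inW0.
rewrite iterS -(subrK (iter k f v) (f _)) -addrA.
by apply: inWD => //; apply/f_sub/Vplus_iter.
Qed.

End Span.

Section InverseOnVplus.
Variables (z T : V -> V).
Hypotheses (z_onto : forall w, Vplus w -> exists v, Vplus v /\ z v = w)
           (zK : forall v, Vplus v -> T (z v) = v).

Lemma Vplus_zinv w : Vplus w -> Vplus (T w).
Proof. by move=> /z_onto [v [Vv <-]]; rewrite zK. Qed.

Lemma zinvK w : Vplus w -> z (T w) = w.
Proof. by move=> /z_onto [v [Vv <-]]; rewrite zK. Qed.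

Lemma zinv_rho X a v :
  (forall u, Vplus u -> z (rho X a u) = rho X a (z u)) ->
  Vplus (rho X a (T v)) -> Vplus v -> T (rho X a v) = rho X a (T v).
Proof.
move=> z_rho V_rhoTv Vv.
by rewrite -{1}(zinvK Vv) -z_rho ?zK //; apply: Vplus_zinv.
Qed.

End InverseOnVplus.

End HighestSpace.

Theorem lemma5p14 (n d : nat) (hn : (2 <= n)%N) (hd : (2 <= d)%N)
  (q : 'I_n -> 'I_n -> CC) (hq : qdata q)
  (V : lmodType CC) (rho : 'M[CC]_d -> Zn n -> V -> V) (dd : 'I_n -> V -> V)
  (hmod : qt_module q rho dd) (hirr : irreducible rho dd)
  (hint : integrable rho dd) (hfin : fin_dim_weight_spaces rho dd)
  (M : 'I_n -> int) (z : 'I_n -> V -> V)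
  (hz : forall i, highest_central rho dd (sce (M i) i) (z i))
  (hzb : forall i, bijective_on_Vplus rho (z i))
  (T : 'I_n -> V -> V)
  (hT : forall i v, Vplus rho v -> T i (z i v) = v) :
  forall i : 'I_n,
  [/\ forall v, Vplus rho v -> T i (z i v) = v,
      forall X a v, in_H X -> Vplus rho v -> T i (rho X a v) = rho X a (T i v),
      forall v, Vplus rho v -> inW rho z (T i v - v),
      forall (k : nat) v, (1 <= k)%N -> Vplus rho v -> inW rho z (iter k (T i) v - v) &
      forall (k : nat) v, (1 <= k)%N -> Vplus rho v -> inW rho z (iter k (z i) v - v)].
Proof.
move=> i; have [z_Vplus _ z_rho _] := hz i; have [_ z_onto] := hzb i.
have T_Vplus := Vplus_zinv z_onto (hT i).
have T_sub v : Vplus rho v -> inW rho z (T i v - v).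
  move=> Vv; rewrite -opprB -scaleN1r -{1}(zinvK z_onto (hT i) Vv).
  by apply/inWZ/inW_gen/T_Vplus.
split=> [|X a v X_diag Vv|//|k v _ Vv|k v _ Vv].
- exact: hT.
- apply: (zinv_rho z_onto (hT i) (z_rho X a ^~ X_diag)) => //.
  exact: (Vplus_rho_H a hmod X_diag (T_Vplus _ Vv)).
- exact: (inW_iter_sub k T_Vplus T_sub Vv).
- exact: (inW_iter_sub k z_Vplus (inW_gen z i) Vv).
Qed.
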